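(* (i) Let two reciprocal $(6,10)$ figures with vertices $\Psi,\Psi_{12},\Phi_1,\Phi_2,\Phi_{13},\Phi_{23}$ and $\Psi_1,\Psi_2,\Phi,\Phi_3,\Phi_{12},\Phi_{123}$ be given, and define the real dilations $a,b,c,d,e,a_3,b_2,c_1,d_2,e_1$ by $$\Phi_{12}-\Phi=a(\Phi_1-\Phi_2),\ \Phi_{13}-\Psi=b(\Psi_1-\Phi_3),\ \Phi_{23}-\Psi=c(\Psi_2-\Phi_3),\ \Psi_1-\Phi=d(\Phi_1-\Psi),\ \Psi_2-\Phi=e(\Phi_2-\Psi),$$ $$\Phi_{123}-\Phi_3=a_3(\Phi_{13}-\Phi_{23}),\ \Phi_{123}-\Psi_2=b_2(\Psi_{12}-\Phi_{23}),\ \Phi_{123}-\Psi_1=c_1(\Psi_{12}-\Phi_{13}),$$ $$\Psi_{12}-\Phi_2=d_2(\Phi_{12}-\Psi_2),\ \Psi_{12}-\Phi_1=e_1(\Phi_{12}-\Psi_1).$$ Then $$a_3=\frac{a}{bc(ad+ed-ea)+a(b-c)},\quad b_2=\frac{a_3(c-b)+1}{c},\quad c_1=\frac{a_3(c-b)+1}{b},\quad d_2=\frac{d}{ad+ed-ea},\quad e_1=\frac{e}{ad+ed-ea}.$$ (ii) Conversely, let $\Phi,\Phi_1,\Phi_2,\Phi_3,\Psi$ be five generic points of $\mathbb{C}$, let $a,b,c,d,e\in\mathbb{R}$ be arbitrary non-vanishing real numbers and let $a_3,b_2,c_1,d_2,e_1$ be given by the formulas above. Then the ten linear equations above are compatible,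 and the points $\Psi,\Psi_{12},\Phi_1,\Phi_2,\Phi_{13},\Phi_{23}$ and $\Psi_1,\Psi_2,\Phi,\Phi_3,\Phi_{12},\Phi_{123}$ are the vertices of two reciprocal $(6,10)$ figures. These satisfy $$Q(\Phi_1,\Phi_2,\Psi,\Psi_{12})=Q(\Psi_2,\Psi_1,\Phi_{12},\Phi),\qquad Q(\Psi_1,\Psi_2,\Phi_3,\Phi_{123})=Q(\Phi_{23},\Phi_{13},\Psi_{12},\Psi).$$
   Context: The plane is identified with $\mathbb{C}$; $Q(P_1,P_2,P_3,P_4)=\frac{(P_1-P_2)(P_3-P_4)}{(P_2-P_3)(P_4-P_1)}$. A $(6,10)$ figure (first kind) has vertices $\Psi,\Psi_{12},\Phi_1,\Phi_2,\Phi_{13},\Phi_{23}$ and the ten straight edges $\Phi_1\Phi_2$, $\Psi\Phi_1$, $\Psi\Phi_2$, $\Psi\Phi_{13}$, $\Psi\Phi_{23}$, $\Phi_{13}\Phi_{23}$, $\Psi_{12}\Phi_{13}$, $\Psi_{12}\Phi_{23}$, $\Psi_{12}\Phi_1$, $\Psi_{12}\Phi_2$ (an octahedral figure with the edges $\Phi_1\Phi_{13}$ and $\Phi_2\Phi_{23}$ removed). Its reciprocal has vertices $\Psi_1,\Psi_2,\Phi,\Phi_3,\Phi_{12},\Phi_{123}$ and ten edges; the two figures are reciprocal when the corresponding edges are parallel, the correspondence being: $\Phi\Phi_{12}\parallel\Phi_1\Phi_2$, $\Psi_1\Phi_3\parallel\Psi\Phi_{13}$, $\Psi_2\Phi_3\parallel\Psi\Phi_{23}$,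 $\Phi\Psi_1\parallel\Psi\Phi_1$, $\Phi\Psi_2\parallel\Psi\Phi_2$, $\Phi_3\Phi_{123}\parallel\Phi_{13}\Phi_{23}$, $\Psi_2\Phi_{123}\parallel\Psi_{12}\Phi_{23}$, $\Psi_1\Phi_{123}\parallel\Psi_{12}\Phi_{13}$, $\Phi_{12}\Psi_2\parallel\Psi_{12}\Phi_2$, $\Phi_{12}\Psi_1\parallel\Psi_{12}\Phi_1$ (lines meeting at a vertex in one figure then form closed polygons in the other, in Maxwell's sense). Parallelism is expressed by the real dilations in the displayed equations. *)

From HB Require Import structures.
From mathcomp Require Import all_boot all_order all_algebra.
From mathcomp Require Import complex.
Set Implicit Arguments. Unset Strict Implicit. Unset Printing Implicit Defensive.
Import Order.TTheory GRing.Theory Num.Theory.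
Local Open Scope ring_scope.

Definition cr {R : rcfType} (x : R) : R[i] := (x%:C)%C.

Definition Qcr {R : rcfType} (P1 P2 P3 P4 : R[i]) : R[i] :=
  (P1 - P2) * (P3 - P4) / ((P2 - P3) * (P4 - P1)).

Definition collinear {R : rcfType} (z1 z2 z3 : R[i]) : Prop :=
  exists r s : R, (r != 0 \/ s != 0) /\ cr r * (z2 - z1) + cr s * (z3 - z1) = 0.

Definition general_position {R : rcfType} (s : seq R[i]) : Prop :=
  forall i j k : nat, (i < j)%N -> (j < k)%N -> (k < size s)%N ->
    ~ collinear (nth 0 s i) (nth 0 s j) (nth 0 s k).

Definition recip_eqs {R : rcfType}
    (Psi Psi12 Phi1 Phi2 Phi13 Phi23 Psi1 Psi2 Phi Phi3 Phi12 Phi123 : R[i])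
    (a b c d e a3 b2 c1 d2 e1 : R) : Prop :=
  Phi12 - Phi = cr a * (Phi1 - Phi2)
   /\ Phi13 - Psi = cr b * (Psi1 - Phi3)
   /\ Phi23 - Psi = cr c * (Psi2 - Phi3)
   /\ Psi1 - Phi = cr d * (Phi1 - Psi)
   /\ Psi2 - Phi = cr e * (Phi2 - Psi)
   /\ Phi123 - Phi3 = cr a3 * (Phi13 - Phi23)
   /\ Phi123 - Psi2 = cr b2 * (Psi12 - Phi23)
   /\ Phi123 - Psi1 = cr c1 * (Psi12 - Phi13)
   /\ Psi12 - Phi2 = cr d2 * (Phi12 - Psi2)
   /\ Psi12 - Phi1 = cr e1 * (Phi12 - Psi1).

Definition reciprocal_6_10 {R : rcfType}
    (Psi Psi12 Phi1 Phi2 Phi13 Phi23 Psi1 Psi2 Phi Phi3 Phi12 Phi123 : R[i]) : Prop :=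
  exists a b c d e a3 b2 c1 d2 e1 : R,
    recip_eqs Psi Psi12 Phi1 Phi2 Phi13 Phi23 Psi1 Psi2 Phi Phi3 Phi12 Phi123
              a b c d e a3 b2 c1 d2 e1.

From HB Require Import structures.
From mathcomp Require Import all_boot all_order all_algebra.
From mathcomp Require Import complex ring.
Import Order.TTheory GRing.Theory Num.Theory.
Local Open Scope ring_scope.

(* The ten parallelisms express every vertex through Phi, Phi1, Phi2, Phi3, Psi
   and the dilations.  Eliminating Psi12 between its two defining relations
   leaves a real linear relation between Phi1 - Psi and Phi2 - Psi; as Psi,
   Phi1, Phi2 are not collinear its coefficients vanish, which determines d2
   and e1 and gives D (Psi12 - Psi) = a (Psi1 - Psi2).  Eliminating Phi123 in
   the same way yields a relation between Phi13 - Psi12 and Phi23 - Psi12 that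
   determines a3 and b2; c1 then follows by exchanging the indices 1 and 2, a
   symmetry of the ten relations which replaces a, a3 by -a, -a3 and fixes
   D and K = b c D + a (b - c).  Conversely, with these values the seven
   remaining vertices can be constructed from the five given points, and both
   cross-ratio identities hold because the numerators and the denominators
   are proportional, with factors D and K / D respectively. *)

Section Collinearity.
Context {R : rcfType}.
Implicit Types (z : R[i]) (x y : R).

Lemma noncollinear_coef_eq0 {z1 z2 z3 x y} : ~ collinear z1 z2 z3 ->
  cr x * (z2 - z1) + cr y * (z3 - z1) = 0 -> x = 0 /\ y = 0.
Proof.
move=> nc rel; have : ~~ ((x != 0) || (y != 0)).
  by apply/negP => /orP nz; apply: nc; exists x, y.
by rewrite negb_or !negbK => /andP[/eqP-> /eqP->].
Qed.

Lemma collinear_swap {z1 z2 z3} : collinear z1 z2 z3 -> collinear z1 z3 z2.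
Proof.
case=> r [s [nz rel]]; exists s, r; split; last by rewrite addrC.
by case: nz; [right | left].
Qed.

Lemma noncollinear_neq {z1 z2 z3} : ~ collinear z1 z2 z3 -> z1 != z2.
Proof.
move=> nc; apply/eqP => z12; apply: nc; exists 1, 0.
by split; [left; exact: oner_neq0 | rewrite z12 subrr mulr0 /cr rmorph0 mul0r add0r].
Qed.

Lemma dilation_neq0 {P Q V : R[i]} {x} : P - Q = cr x * V -> P != Q -> x != 0.
Proof.
move=> PQ; apply: contra_neq => x0.
by apply/eqP; rewrite -subr_eq0 PQ x0 /cr rmorph0 mul0r.
Qed.

End Collinearity.

Lemma eq_Qcr_scaled (R : rcfType) (u v P1 P2 P3 P4 Q1 Q2 Q3 Q4 : R[i]) :
  u != 0 -> v != 0 ->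
  u * ((Q1 - Q2) * (Q3 - Q4)) = v * ((P1 - P2) * (P3 - P4)) ->
  u * ((Q2 - Q3) * (Q4 - Q1)) = v * ((P2 - P3) * (P4 - P1)) ->
  Qcr P1 P2 P3 P4 = Qcr Q1 Q2 Q3 Q4.
Proof.
have scale (w N M : R[i]) : w != 0 -> (w * N) / (w * M) = N / M.
  by move=> w0; rewrite invfM mulrACA divff // mul1r.
by move=> u0 v0 num den; rewrite /Qcr -(scale v) // -num -den scale.
Qed.

Lemma recip_eqs_swap {R : rcfType}
    {Psi Psi12 Phi1 Phi2 Phi13 Phi23 Psi1 Psi2 Phi Phi3 Phi12 Phi123 : R[i]}
    {a b c d e a3 b2 c1 d2 e1 : R} :
  recip_eqs Psi Psi12 Phi1 Phi2 Phi13 Phi23 Psi1 Psi2 Phi Phi3 Phi12 Phi123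
            a b c d e a3 b2 c1 d2 e1 ->
  recip_eqs Psi Psi12 Phi2 Phi1 Phi23 Phi13 Psi2 Psi1 Phi Phi3 Phi12 Phi123
            (- a) c b e d (- a3) c1 b2 e1 d2.
Proof.
case=> E1 [E2 [E3 [E4 [E5 [E6 [E7 [E8 [E9 E10]]]]]]]].
by do !split => //; rewrite ?E1 ?E6 /cr; ring.
Qed.

Section ReciprocalFigure.
Context {R : rcfType}.
Context {Psi Psi12 Phi1 Phi2 Phi13 Phi23 Psi1 Psi2 Phi Phi3 Phi12 Phi123 : R[i]}.
Context {a b c d e a3 b2 c1 d2 e1 : R}.
Variables D K : R.
Hypothesis recip : recip_eqs Psi Psi12 Phi1 Phi2 Phi13 Phi23 Psi1 Psi2 Phi Phi3
                             Phi12 Phi123 a b c d e a3 b2 c1 d2 e1.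
Hypothesis D_def : D = a * d + e * d - e * a.
Hypothesis K_def : K = b * c * D + a * (b - c).

Lemma dilations_d2_e1 : ~ collinear Psi Phi1 Phi2 -> D * d2 = d /\ D * e1 = e.
Proof.
move=> nc; have [E1 [_ [_ [E4 [E5 [_ [_ [_ [E9 E10]]]]]]]]] := recip.
have rel : cr (d2 * a - e1 * (a - d) - 1) * (Phi1 - Psi)
         + cr (1 - d2 * (a + e) + e1 * a) * (Phi2 - Psi) = 0.
  have <- : Psi12 - Phi1 - cr e1 * (Phi12 - Psi1)
            - (Psi12 - Phi2 - cr d2 * (Phi12 - Psi2)) = 0.
    by rewrite E9 E10 !subrr.
  by rewrite (canRL (subrK _) E1) (canRL (subrK _) E4) (canRL (subrK _) E5) /cr; ring.
have [u0 v0] := noncollinear_coef_eq0 nc rel.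
split; apply/eqP; rewrite -subr_eq0; apply/eqP.
- have -> : D * d2 - d = a * (d2 * a - e1 * (a - d) - 1)
                         + (a - d) * (1 - d2 * (a + e) + e1 * a) by rewrite D_def; ring.
  by rewrite u0 v0 !mulr0 addr0.
- have -> : D * e1 - e = (a + e) * (d2 * a - e1 * (a - d) - 1)
                         + a * (1 - d2 * (a + e) + e1 * a) by rewrite D_def; ring.
  by rewrite u0 v0 !mulr0 addr0.
Qed.

Lemma Psi12_parallel : D * d2 = d -> cr D * (Psi12 - Psi) = cr a * (Psi1 - Psi2).
Proof.
move=> Dd2; have [E1 [_ [_ [E4 [E5 [_ [_ [_ [E9 _]]]]]]]]] := recip.
have -> : cr D * (Psi12 - Psi) = cr D * (Phi2 - Psi) + cr (D * d2) * (Phi12 - Psi2).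
  by rewrite (canRL (subrK _) E9) /cr; ring.
rewrite Dd2 (canRL (subrK _) E1) (canRL (subrK _) E4) (canRL (subrK _) E5) D_def /cr.
ring.
Qed.

Lemma Psi12_coords : D * d2 = d ->
  cr K * (Psi12 - Psi) = cr a * (cr c * (Phi13 - Psi12) - cr b * (Phi23 - Psi12)).
Proof.
move=> Dd2; have [_ [E2 [E3 _]]] := recip.
have -> : cr K * (Psi12 - Psi)
    = cr (b * c) * (cr D * (Psi12 - Psi)) + cr (a * (b - c)) * (Psi12 - Psi).
  by rewrite K_def /cr; ring.
by rewrite Psi12_parallel // (canRL (subrK _) E2) (canRL (subrK _) E3) /cr; ring.
Qed.

Lemma dilations_a3_b2 : ~ collinear Psi12 Phi13 Phi23 -> c != 0 -> D * d2 = d ->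
  K * a3 = a /\ c * K * b2 = a * (c - b) + K.
Proof.
move=> nc c0 Dd2; have [_ [_ [E3 [_ [_ [E6 [E7 _]]]]]]] := recip.
(* Phi123 is eliminated between E6 and E7; Psi2 via E3 and Psi12 - Psi via
   Psi12_coords then bring everything to the basis Phi13 - Psi12, Phi23 - Psi12. *)
have rel : cr (c * (K * a3 - a)) * (Phi13 - Psi12)
         + cr (c * K * (b2 - a3) + a * b - K) * (Phi23 - Psi12) = 0.
  have <- : cr (c * K) * (Phi123 - Psi2 - cr b2 * (Psi12 - Phi23)
                          - (Phi123 - Phi3 - cr a3 * (Phi13 - Phi23)))
          - cr K * (Phi23 - Psi - cr c * (Psi2 - Phi3))
          + (cr K * (Psi12 - Psi)
             - cr a * (cr c * (Phi13 - Psi12) - cr b * (Phi23 - Psi12))) = 0.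
    by rewrite E3 E6 E7 Psi12_coords // /cr; ring.
  by rewrite /cr; ring.
have [/eqP u0 v0] := noncollinear_coef_eq0 nc rel.
have Ka3 : K * a3 = a by move: u0; rewrite mulf_eq0 (negbTE c0) subr_eq0 => /eqP.
split=> //.
have -> : c * K * b2 = c * K * (b2 - a3) + a * b - K + c * (K * a3) - a * b + K by ring.
by rewrite v0 Ka3; ring.
Qed.

Lemma cross_ratio_Psi12 : D != 0 -> D * d2 = d -> D * e1 = e ->
  Qcr Phi1 Phi2 Psi Psi12 = Qcr Psi2 Psi1 Phi12 Phi.
Proof.
move=> D0 Dd2 De1; have [E1 [_ [_ [_ [E5 [_ [_ [_ [_ E10]]]]]]]]] := recip.
apply: (@eq_Qcr_scaled _ 1 (cr D)); rewrite ?oner_neq0 ?fmorph_eq0 //.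
- have -> : cr D * ((Phi1 - Phi2) * (Psi - Psi12))
      = - ((Phi1 - Phi2) * (cr D * (Psi12 - Psi))) by ring.
  by rewrite Psi12_parallel // E1 /cr; ring.
- by rewrite E10 -[Phi - Psi2]opprB E5 -De1 /cr; ring.
Qed.

Lemma cross_ratio_Phi123 : D != 0 -> K != 0 -> D * d2 = d -> K * a3 = a ->
  K * c1 = c * D -> Qcr Psi1 Psi2 Phi3 Phi123 = Qcr Phi23 Phi13 Psi12 Psi.
Proof.
move=> D0 K0 Dd2 Ka3 Kc1; have [_ [_ [E3 [_ [_ [E6 [_ [E8 _]]]]]]]] := recip.
apply: (@eq_Qcr_scaled _ (cr D) (cr K)); rewrite ?fmorph_eq0 //.
- have -> : cr D * ((Phi23 - Phi13) * (Psi12 - Psi))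
      = (Phi23 - Phi13) * (cr D * (Psi12 - Psi)) by ring.
  by rewrite Psi12_parallel // -Ka3 (canRL (subrK _) E6) /cr; ring.
- have -> : cr K * ((Psi2 - Phi3) * (Phi123 - Psi1))
      = cr (K * c1) * (Psi2 - Phi3) * (Psi12 - Phi13) by rewrite E8 /cr; ring.
  by rewrite Kc1 (canRL (subrK _) E3) /cr; ring.
Qed.

End ReciprocalFigure.

Lemma reciprocal_dilations {R : rcfType}
    {Psi Psi12 Phi1 Phi2 Phi13 Phi23 Psi1 Psi2 Phi Phi3 Phi12 Phi123 : R[i]}
    {a b c d e a3 b2 c1 d2 e1 : R} :
  recip_eqs Psi Psi12 Phi1 Phi2 Phi13 Phi23 Psi1 Psi2 Phi Phi3 Phi12 Phi123
            a b c d e a3 b2 c1 d2 e1 ->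
  ~ collinear Psi Phi1 Phi2 -> ~ collinear Psi12 Phi13 Phi23 ->
  Phi12 != Phi -> Phi13 != Psi -> Phi23 != Psi -> Psi1 != Phi ->
  let D := a * d + e * d - e * a in
  [/\ a3 = a / (b * c * D + a * (b - c)),
      b2 = (a3 * (c - b) + 1) / c,
      c1 = (a3 * (c - b) + 1) / b,
      d2 = d / D &
      e1 = e / D].
Proof.
move=> E nc_base nc_top Phi12_Phi Phi13_Psi Phi23_Psi Psi1_Phi D.
have [E1 [E2 [E3 [E4 _]]]] := E.
have a0 := dilation_neq0 E1 Phi12_Phi; have b0 := dilation_neq0 E2 Phi13_Psi.
have c0 := dilation_neq0 E3 Phi23_Psi; have d0 := dilation_neq0 E4 Psi1_Phi.
have [Dd2 De1] := dilations_d2_e1 D E erefl nc_base.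
have D0 : D != 0 by move: d0; apply: contra_neq => D0; rewrite -Dd2 D0 mul0r.
set K := b * c * D + a * (b - c).
have [Ka3 Kb2] := dilations_a3_b2 D K E erefl erefl nc_top c0 Dd2.
have Kc1 : b * K * c1 = - a * (b - c) + K.
  (* b2 of the figure with the indices 1 and 2 exchanged *)
  have D_swap : D = - a * e + d * e - d * - a by rewrite /D; ring.
  have K_swap : K = c * b * D + - a * (c - b) by rewrite /K; ring.
  have nc_top' : ~ collinear Psi12 Phi23 Phi13 := fun h => nc_top (collinear_swap h).
  by case: (dilations_a3_b2 D K (recip_eqs_swap E) D_swap K_swap nc_top' b0 De1).
have K0 : K != 0 by move: a0; apply: contra_neq => K0; rewrite -Ka3 K0 mul0r.
split.
- by rewrite -Ka3; field.
- by apply: (mulfI (mulf_neq0 c0 K0)); rewrite Kb2 -Ka3; field.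
- by apply: (mulfI (mulf_neq0 b0 K0)); rewrite Kc1 -Ka3; field.
- by rewrite -Dd2; field.
- by rewrite -De1; field.
Qed.

Lemma reciprocal_figure_exists {R : rcfType} (Phi Phi1 Phi2 Phi3 Psi : R[i])
    {a b c d e D K : R} :
  D = a * d + e * d - e * a -> K = b * c * D + a * (b - c) ->
  b != 0 -> c != 0 -> D != 0 -> K != 0 ->
  exists Psi12 Phi13 Phi23 Psi1 Psi2 Phi12 Phi123 : R[i],
    [/\ recip_eqs Psi Psi12 Phi1 Phi2 Phi13 Phi23 Psi1 Psi2 Phi Phi3 Phi12 Phi123
          a b c d e (a / K) ((a / K * (c - b) + 1) / c) ((a / K * (c - b) + 1) / b)
          (d / D) (e / D),
        Qcr Phi1 Phi2 Psi Psi12 = Qcr Psi2 Psi1 Phi12 Phi &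
        Qcr Psi1 Psi2 Phi3 Phi123 = Qcr Phi23 Phi13 Psi12 Psi].
Proof.
move=> D_def K_def b0 c0 D0 K0.
pose Psi1 := Phi + cr d * (Phi1 - Psi).
pose Psi2 := Phi + cr e * (Phi2 - Psi).
pose Phi12 := Phi + cr a * (Phi1 - Phi2).
pose Phi13 := Psi + cr b * (Psi1 - Phi3).
pose Phi23 := Psi + cr c * (Psi2 - Phi3).
pose Psi12 := Phi2 + cr (d / D) * (Phi12 - Psi2).
pose Phi123 := Phi3 + cr (a / K) * (Phi13 - Phi23).
have E : recip_eqs Psi Psi12 Phi1 Phi2 Phi13 Phi23 Psi1 Psi2 Phi Phi3 Phi12 Phi123
    a b c d e (a / K) ((a / K * (c - b) + 1) / c) ((a / K * (c - b) + 1) / b)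
    (d / D) (e / D).
  rewrite /recip_eqs /Psi12 /Phi123 /Phi13 /Phi23 /Phi12 /Psi1 /Psi2 /cr.
  move: D0 K0; rewrite K_def D_def => D0 K0.
  by do !split; field; rewrite -?(rmorphM, rmorphB, rmorphD) ?fmorph_eq0 ?D0 ?K0 ?b0 ?c0.
have Dd2 : D * (d / D) = d by rewrite mulrC divfK.
exists Psi12, Phi13, Phi23, Psi1, Psi2, Phi12, Phi123; split=> //.
- by apply: (cross_ratio_Psi12 D E) => //; rewrite mulrC divfK.
- apply: (cross_ratio_Phi123 D K E) => //; first by rewrite mulrC divfK.
  by rewrite K_def; field; rewrite -K_def b0 K0.
Qed.

Theorem theorem5 (R : rcfType) :
  (* (i) *)
  (forall (Psi Psi12 Phi1 Phi2 Phi13 Phi23 Psi1 Psi2 Phi Phi3 Phi12 Phi123 : R[i])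
          (a b c d e a3 b2 c1 d2 e1 : R),
     general_position [:: Psi; Psi12; Phi1; Phi2; Phi13; Phi23] ->
     general_position [:: Psi1; Psi2; Phi; Phi3; Phi12; Phi123] ->
     recip_eqs Psi Psi12 Phi1 Phi2 Phi13 Phi23 Psi1 Psi2 Phi Phi3 Phi12 Phi123
               a b c d e a3 b2 c1 d2 e1 ->
     let D := a * d + e * d - e * a in
     [/\ a3 = a / (b * c * D + a * (b - c)),
         b2 = (a3 * (c - b) + 1) / c,
         c1 = (a3 * (c - b) + 1) / b,
         d2 = d / D &
         e1 = e / D])
  /\
  (* (ii) *)
  (forall (Phi Phi1 Phi2 Phi3 Psi : R[i]),
     general_position [:: Phi; Phi1; Phi2; Phi3; Psi] ->
     forall a b c d e : R,
     a != 0 -> b != 0 -> c != 0 -> d != 0 -> e != 0 ->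
     let D := a * d + e * d - e * a in
     D != 0 -> b * c * D + a * (b - c) != 0 ->
     let a3 := a / (b * c * D + a * (b - c)) in
     let b2 := (a3 * (c - b) + 1) / c in
     let c1 := (a3 * (c - b) + 1) / b in
     let d2 := d / D in
     let e1 := e / D in
     exists Psi12 Phi13 Phi23 Psi1 Psi2 Phi12 Phi123 : R[i],
       [/\ recip_eqs Psi Psi12 Phi1 Phi2 Phi13 Phi23 Psi1 Psi2 Phi Phi3 Phi12 Phi123
                     a b c d e a3 b2 c1 d2 e1,
           reciprocal_6_10 Psi Psi12 Phi1 Phi2 Phi13 Phi23 Psi1 Psi2 Phi Phi3 Phi12 Phi123,
           Qcr Phi1 Phi2 Psi Psi12 = Qcr Psi2 Psi1 Phi12 Phi &
           Qcr Psi1 Psi2 Phi3 Phi123 = Qcr Phi23 Phi13 Psi12 Psi]).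
Proof.
split.
  move=> Psi Psi12 Phi1 Phi2 Phi13 Phi23 Psi1 Psi2 Phi Phi3 Phi12 Phi123
    a b c d e a3 b2 c1 d2 e1 G1 G2 E.
  have nc_Psi : ~ collinear Psi Phi13 Phi23 := G1 0%N 4%N 5%N erefl erefl erefl.
  apply: (reciprocal_dilations E (G1 0%N 2%N 3%N erefl erefl erefl)
                                 (G1 1%N 4%N 5%N erefl erefl erefl)).
  - by rewrite eq_sym; exact: (noncollinear_neq (G2 2%N 4%N 5%N erefl erefl erefl)).
  - by rewrite eq_sym; exact: (noncollinear_neq nc_Psi).
  - by rewrite eq_sym; exact: (noncollinear_neq (fun h => nc_Psi (collinear_swap h))).
  - exact: (noncollinear_neq (G2 0%N 2%N 3%N erefl erefl erefl)).
move=> Phi Phi1 Phi2 Phi3 Psi _ a b c d e _ b0 c0 _ _ D D0 K0.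
have [Psi12 [Phi13 [Phi23 [Psi1 [Psi2 [Phi12 [Phi123 [E Q1 Q2]]]]]]]] :=
  reciprocal_figure_exists Phi Phi1 Phi2 Phi3 Psi erefl erefl b0 c0 D0 K0.
exists Psi12, Phi13, Phi23, Psi1, Psi2, Phi12, Phi123; split=> //.
by do 10!eexists; exact: E.
Qed.
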